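(* Let $m,n$ be positive integers and $p$ an odd prime not dividing $m$. For $r\in\mathbb Z$ define $K_p(r,m)=\sum_{1\le k\le p-1,\ m\mid k-rp}\frac1k$. Then $$B_{p-1}\Big(\Big\{\frac{pn}m\Big\}\Big)-B_{p-1}\equiv m\sum_{r=1}^nK_p(r,m)\equiv-\sum_{\substack{1\le k\le\lfloor pn/m\rfloor\\ p\nmid k}}\frac1k\pmod p,$$ and moreover $K_p(r,m)\equiv-K_p(1-r,m)\pmod p$ for every $r\in\mathbb Z$.
   Context: $\{x\}$ denotes the fractional part and $\lfloor x\rfloor$ the integer part of $x$; $B_n(x)$ is the $n$th Bernoulli polynomial and $B_n=B_n(0)$. Congruences modulo $p$ are between rational numbers whose denominators are prime to $p$. *)

From HB Require Import structures.
From mathcomp Require Import all_boot all_order all_algebra.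
Set Implicit Arguments. Unset Strict Implicit. Unset Printing Implicit Defensive.
Import Order.TTheory GRing.Theory Num.Theory.
Local Open Scope ring_scope.

(* [:: B_0; ...; B_n], via sum_{k=0}^{N} C(N+1,k) B_k = 0 for N >= 1, B_0 = 1 *)
Fixpoint bern_seq (n : nat) : seq rat :=
  match n with
  | 0 => [:: 1]
  | n'.+1 => let s := bern_seq n' in
      rcons s (- (n'.+2%:R)^-1 *
               \sum_(k < n'.+1) ('C(n'.+2, k))%:R * nth 0 s k)
  end.

(* Bernoulli numbers B_n (convention B_1 = -1/2, i.e. B_n = B_n(0)) *)
Definition bernoulli (n : nat) : rat := nth 0 (bern_seq n) n.

Definition bernpoly (n : nat) (x : rat) : rat :=
  \sum_(k < n.+1) ('C(n, k))%:R * bernoulli k * x ^+ (n - k).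

Definition fracpart (x : rat) : rat := x - (Num.floor x)%:~R.

Definition pintegral (p : nat) (x : rat) : bool := ~~ (p %| `|denq x|)%N.

Definition ratcongp (p : nat) (a b : rat) : Prop :=
  [/\ pintegral p a, pintegral p b & (p%:Z %| numq (a - b))%Z].

Definition Kp (p : nat) (r : int) (m : nat) : rat :=
  \sum_(1 <= k < p | (m%:Z %| k%:Z - r * p%:Z)%Z) (k%:R)^-1.

From HB Require Import structures.
From mathcomp Require Import all_boot all_order all_algebra cyclic.
From mathcomp Require Import ring zify.
Set Implicit Arguments. Unset Strict Implicit. Unset Printing Implicit Defensive.
Import Order.TTheory GRing.Theory Num.Theory.
Local Open Scope ring_scope.

(* The right-hand congruences come from the substitution k -> p - k.  Since
   1/k + 1/(p - k) = p / (k (p - k)), it gives K_p(r,m) = -K_p(1-r,m) mod p, and it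
   rewrites m K_p(s+1,m) as a sum of m/(p - k) over 1 <= k < p with m | k + sp, each
   congruent to -m/(k + sp).  As s runs over 0..n-1 the numbers t = k + sp run over
   the t < pn prime to p, and the multiples t = mj of m leave -sum 1/j over
   j <= pn/m, p not dividing j.
   For the Bernoulli side, B_N(x+1) - B_N(x) = N x^(N-1) gives, for P = p - 1,
   B_P(-N) - B_P = sum_(k <= N) P k^(P-1), and by Fermat P k^(P-1) = -1/k mod p
   when p does not divide k (and 0 otherwise).  Finally B_P(x) - B_P has p-integral
   coefficients (the recursion for B_j only divides by j + 1 < p) and
   {pn/m} = pn/m - N = -N mod p with N = floor(pn/m). *)

Lemma size_bern_seq n : size (bern_seq n) = n.+1.
Proof. by elim: n => //= n IHn; rewrite size_rcons IHn. Qed.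

Lemma nth_bern_seq n k : (k <= n)%N -> nth 0 (bern_seq n) k = bernoulli k.
Proof.
elim: n => [|n IHn]; first by rewrite leqn0 => /eqP ->.
rewrite leq_eqVlt => /predU1P[-> //|lt_kn].
by rewrite /= nth_rcons size_bern_seq lt_kn IHn.
Qed.

Lemma bernoulliS n : bernoulli n.+1 =
  - (n.+2%:R)^-1 * \sum_(k < n.+1) 'C(n.+2, k)%:R * bernoulli k.
Proof.
rewrite {1}/bernoulli /= nth_rcons size_bern_seq ltnn eqxx.
by congr (_ * _); apply: eq_bigr => k _; rewrite nth_bern_seq // -ltnS.
Qed.

Lemma sum_binomial_bernoulli N : (0 < N)%N ->
  \sum_(0 <= k < N) 'C(N, k)%:R * bernoulli k = (N == 1)%:R :> rat.
Proof.
case: N => [//|[|n]] _; first by rewrite big_nat1 bin0 mulr1.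
rewrite big_mkord big_ord_recr /= binSn bernoulliS mulrA mulrN divff ?pnatr_eq0 //.
by rewrite mulN1r subrr.
Qed.

Lemma binomial_swap N i j : (i + j <= N)%N ->
  ('C(N, j) * 'C(N - j, i) = 'C(N, i) * 'C(N - i, j))%N.
Proof.
have fact_split a b : (a + b <= N)%N ->
    ('C(N, a) * 'C(N - a, b) * (a`! * b`! * (N - a - b)`!) = N`!)%N.
  move=> le_abN; rewrite -(@bin_fact N a) -1?(@bin_fact (N - a) b); [ring | lia..].
move=> le_ijN; apply/eqP.
rewrite -(eqn_pmul2r (_ : 0 < j`! * i`! * (N - j - i)`!)%N) ?muln_gt0 ?fact_gt0 //.
by rewrite fact_split 1?addnC // (mulnC j`!) subnAC fact_split.
Qed.

Lemma exprD1n_sub (x : rat) M :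
  (x + 1) ^+ M - x ^+ M = \sum_(0 <= i < M) 'C(M, i)%:R * x ^+ i.
Proof.
rewrite exprD1n big_ord_recr /= binn mulr1n addrK big_mkord.
by apply: eq_bigr => i _; rewrite mulr_natl.
Qed.

Lemma exchange_big_triangle (V : nmodType) N (F : nat -> nat -> V) :
  \sum_(0 <= j < N) \sum_(0 <= i < N - j) F i j =
  \sum_(0 <= i < N) \sum_(0 <= j < N - i) F i j.
Proof.
have widen k G : \sum_(0 <= i < N - k) G i =
    \sum_(0 <= i < N) (if (i + k < N)%N then G i else 0) :> V.
  rewrite (big_nat_widen _ _ N) ?leq_subr // -big_mkcond.
  by apply: congr_big_nat => // i _; lia.
under eq_bigr do rewrite widen; rewrite exchange_big_nat.
by apply: eq_bigr => i _; rewrite widen; apply: eq_bigr => j _; rewrite addnC.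
Qed.

Lemma bernpoly_sub_bernoulli N x : bernpoly N x - bernoulli N =
  \sum_(0 <= j < N) 'C(N, j)%:R * bernoulli j * x ^+ (N - j).
Proof.
by rewrite /bernpoly big_ord_recr /= binn subnn expr0 mulr1 mul1r addrK big_mkord.
Qed.

Lemma bernpolyD1 N x : (0 < N)%N ->
  bernpoly N (x + 1) - bernpoly N x = N%:R * x ^+ N.-1.
Proof.
move=> N_gt0.
have -> : bernpoly N (x + 1) - bernpoly N x =
    (bernpoly N (x + 1) - bernoulli N) - (bernpoly N x - bernoulli N) by ring.
rewrite !bernpoly_sub_bernoulli -sumrB.
transitivity (\sum_(0 <= j < N) \sum_(0 <= i < N - j)
    'C(N, j)%:R * bernoulli j * ('C(N - j, i)%:R * x ^+ i)).
  by apply: eq_bigr => j _; rewrite -mulrBr exprD1n_sub mulr_sumr.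
rewrite exchange_big_triangle.
transitivity (\sum_(0 <= i < N) 'C(N, i)%:R * x ^+ i * (N - i == 1)%N%:R).
  apply: eq_big_nat => i /andP[_ lt_iN].
  rewrite -sum_binomial_bernoulli ?subn_gt0 // mulr_sumr.
  apply: eq_big_nat => j /andP[_ lt_j].
  transitivity (('C(N, j) * 'C(N - j, i))%N%:R * bernoulli j * x ^+ i).
    by rewrite natrM; ring.
  by rewrite binomial_swap; [rewrite natrM; ring | lia].
case: N N_gt0 => // N _.
rewrite big_nat_recr //= subSn // subnn eqxx mulr1 binSn mulrC big1_seq ?add0r //.
move=> i; rewrite mem_iota add0n => lt_iN.
by rewrite (_ : (N.+1 - i == 1)%N = false) ?mulr0 //; lia.
Qed.

Lemma bernpoly_oppn P N : (0 < P)%N -> odd P.-1 ->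
  bernpoly P (- N%:R) - bernoulli P = \sum_(1 <= k < N.+1) P%:R * k%:R ^+ P.-1.
Proof.
move=> P_gt0 odd_P1; elim: N => [|N IHN].
  rewrite big_geq // oppr0 bernpoly_sub_bernoulli big_nat_cond big1 // => j /andP[/andP[_ lt_jP] _].
  by rewrite expr0n subn_eq0 leqNgt lt_jP mulr0.
have shift : - N.+1%:R + 1 = - N%:R :> rat by rewrite -addn1 natrD opprD subrK.
have := bernpolyD1 (- N.+1%:R) P_gt0.
rewrite shift exprNn -signr_odd odd_P1 expr1 => step.
rewrite big_nat_recr //= -IHN.
have -> : bernpoly P (- N.+1%:R) =
    bernpoly P (- N%:R) - P%:R * (-1 * N.+1%:R ^+ P.-1) by rewrite -step; ring.
ring.
Qed.

Lemma big_nat_dvd (V : nmodType) m a (F : nat -> V) : (0 < m)%N ->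
  \sum_(0 <= t < a.+1 | (m %| t)%N) F t = \sum_(0 <= j < (a %/ m).+1) F (m * j)%N.
Proof.
move=> m_gt0; rewrite big_mkcond /=; elim: a => [|a IHa].
  by rewrite div0n !big_nat1 dvdn0 muln0.
rewrite big_nat_recr //= IHa divnS //.
case: ifP => [m_dvd | _]; last by rewrite addr0.
have divSm : ((a %/ m).+1 = a.+1 %/ m)%N by rewrite divnS // m_dvd.
by rewrite add1n [RHS]big_nat_recr //= [in F (m * _)%N]divSm mulnC divnK.
Qed.

Lemma big_nat_blocks (V : nmodType) q n (P : pred nat) (F : nat -> V) : (0 < q)%N ->
  \sum_(0 <= s < n) \sum_(1 <= k < q | P (k + s * q)%N) F (k + s * q)%N =
  \sum_(0 <= t < n * q | P t && ~~ (q %| t)%N) F t.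
Proof.
move=> q_gt0; elim: n => [|n IHn]; first by rewrite mul0n !big_geq.
rewrite big_nat_recr // IHn mulSnr [RHS](@big_cat_nat _ _ _ (n * q)) ?leq_addr //=.
congr (_ + _).
rewrite (big_addn 0 _ (n * q)) addKn [RHS]big_ltn_cond //= add0n dvdn_mull ?andbF //=.
apply: congr_big_nat => // k /andP[k_gt0 lt_kq].
by rewrite dvdn_addl ?dvdn_mull // gtnNdvd ?andbT.
Qed.

Lemma fracpart_divn a m : (0 < m)%N ->
  fracpart (a%:R / m%:R) = a%:R / m%:R - (a %/ m)%:R.
Proof.
move=> m_gt0; have m_pos : (0 : rat) < m%:R by rewrite ltr0n.
rewrite /fracpart (@floor_def _ _ (a %/ m)%N%:Z) ?pmulrn // intrD -!pmulrn.
rewrite ler_pdivlMr // ltr_pdivrMr // natr1 -!natrM ler_nat ltr_nat.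
by rewrite leq_divM ltn_ceil.
Qed.

Lemma numq_mul_den (a b : int) : b != 0 ->
  numq (a%:~R / b%:~R : rat) * b = a * denq (a%:~R / b%:~R : rat).
Proof.
move=> b_neq0; apply/eqP; rewrite -(eqr_int rat) !intrM numqE; apply/eqP.
by field; rewrite intr_eq0.
Qed.

Section PAdicCongruence.

Variable p : nat.
Hypothesis p_prime : prime p.

(* The p-integral rationals form a subring; the canonical instance below lets the
   generic [rpred] lemmas do the integrality bookkeeping. *)
Definition pint : qualifier 1 rat := [qualify a x | pintegral p x].

Lemma pintP x :
  reflect (exists a b : int, ~~ (p %| `|b|)%N /\ x = a%:~R / b%:~R) (x \is a pint).
Proof.
apply: (iffP idP) => [p_ndvd_den | [a [b [p_ndvd_b ->]]]].
  by exists (numq x), (denq x); rewrite divq_num_den.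
have b_neq0 : b != 0 by apply: contraNneq p_ndvd_b => ->.
rewrite qualifE /pintegral; apply: contra p_ndvd_b => /dvdn_trans; apply.
set y := _ / _.
have : (`|denq y| %| `|numq y| * `|b|)%N.
  by rewrite -abszM numq_mul_den // abszM dvdn_mull.
by rewrite Gauss_dvdr // coprime_sym coprime_num_den.
Qed.

Fact pint_subring_closed : subring_closed pint.
Proof.
have p_ndvdM (b d : int) :
    ~~ (p %| `|b|)%N -> ~~ (p %| `|d|)%N -> ~~ (p %| `|(b * d)%R|)%N.
  by move=> p_ndvd_b p_ndvd_d; rewrite abszM Euclid_dvdM // negb_or p_ndvd_b.
have intr_neq0 (b : int) : ~~ (p %| `|b|)%N -> (b%:~R : rat) != 0.
  by move=> p_ndvd_b; rewrite intr_eq0; apply: contraNneq p_ndvd_b => ->.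
split.
- apply/pintP; exists 1, 1; rewrite divr1 absz1 dvdn1; split=> //.
  by apply: contraTneq p_prime => ->.
- move=> _ _ /pintP[a [b [p_ndvd_b ->]]] /pintP[c [d [p_ndvd_d ->]]].
  apply/pintP; exists (a * d - c * b), (b * d); split; first exact: p_ndvdM.
  by rewrite intrB !intrM; field; rewrite !intr_neq0.
- move=> _ _ /pintP[a [b [p_ndvd_b ->]]] /pintP[c [d [p_ndvd_d ->]]].
  apply/pintP; exists (a * c), (b * d); split; first exact: p_ndvdM.
  by rewrite !intrM; field; rewrite !intr_neq0.
Qed.

HB.instance Definition _ :=
  GRing.isSubringClosed.Build rat (pintegral p) pint_subring_closed.

Lemma pint_invn k : ~~ (p %| k)%N -> k%:R^-1 \is a pint.
Proof. by move=> p_ndvd_k; apply/pintP; exists 1, k; rewrite div1r -pmulrn. Qed.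

Lemma pdvd_numq x : (p%:Z %| numq x)%Z = (x / p%:R \is a pint).
Proof.
have p_neq0 : (p%:R : rat) != 0 by rewrite pnatr_eq0 -lt0n prime_gt0.
apply/idP/pintP => [/dvdzP[c num_x] | [c [d [p_ndvd_d x_p]]]].
  exists c, (denq x); split.
    by rewrite -prime_coprime // (coprime_dvdl _ (coprime_num_den x)) // num_x abszM dvdn_mull.
  rewrite -[x in LHS]divq_num_den num_x intrM -pmulrn.
  by field; rewrite p_neq0 intr_eq0 denq_neq0.
have d_neq0 : d != 0 by apply: contraNneq p_ndvd_d => ->.
have x_eq : x = (p%:Z * c)%:~R / d%:~R.
  by rewrite intrM -pmulrn -mulrA -x_p mulrC mulfVK.
have : (p %| `|numq x| * `|d|)%N.
  by rewrite -abszM {1}x_eq numq_mul_den // -x_eq !abszM -mulnA dvdn_mulr.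
by rewrite dvdzE Euclid_dvdM // (negbTE p_ndvd_d) orbF.
Qed.

Lemma ratcongpP a b : ratcongp p a b <->
  [/\ a \is a pint, b \is a pint & (a - b) / p%:R \is a pint].
Proof. by rewrite /ratcongp pdvd_numq. Qed.

Lemma ratcongp_diff a b y : b \is a pint -> y \is a pint ->
  a - b = p%:R * y -> ratcongp p a b.
Proof.
move=> b_int y_int ab; have p_neq0 : (p%:R : rat) != 0 by rewrite pnatr_eq0 -lt0n prime_gt0.
apply/ratcongpP; split=> //; last by rewrite ab mulrC mulKf.
rewrite -(subrK b a) ab; apply: rpredD => //; apply: rpredM => //; exact: rpred_nat.
Qed.

Lemma ratcongp_refl a : a \is a pint -> ratcongp p a a.
Proof. by move=> a_int; apply: (ratcongp_diff (y := 0)); rewrite ?rpred0 ?subrr ?mulr0. Qed.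

Lemma ratcongp_sym a b : ratcongp p a b -> ratcongp p b a.
Proof. by move=> /ratcongpP[a_int b_int ab]; apply/ratcongpP; rewrite -opprB mulNr rpredN. Qed.

Lemma ratcongp_trans b a c : ratcongp p a b -> ratcongp p b c -> ratcongp p a c.
Proof.
move=> /ratcongpP[a_int _ ab] /ratcongpP[_ c_int bc]; apply/ratcongpP; split=> //.
by rewrite -(subrKA b) mulrDl; apply: rpredD.
Qed.

Lemma ratcongpD a b c d :
  ratcongp p a b -> ratcongp p c d -> ratcongp p (a + c) (b + d).
Proof.
move=> /ratcongpP[a_int b_int ab] /ratcongpP[c_int d_int cd].
apply/ratcongpP; split; [exact: rpredD | exact: rpredD |].
by rewrite opprD addrACA mulrDl; apply: rpredD.
Qed.

Lemma ratcongpM a b c d :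
  ratcongp p a b -> ratcongp p c d -> ratcongp p (a * c) (b * d).
Proof.
move=> /ratcongpP[a_int b_int ab] /ratcongpP[c_int d_int cd].
apply/ratcongpP; split; [exact: rpredM | exact: rpredM |].
have -> : (a * c - b * d) / p%:R = (a - b) / p%:R * c + b * ((c - d) / p%:R) by ring.
by apply: rpredD; apply: rpredM.
Qed.

Lemma ratcongpX a b k : ratcongp p a b -> ratcongp p (a ^+ k) (b ^+ k).
Proof.
move=> ab; elim: k => [|k IHk]; first by rewrite !expr0; apply/ratcongp_refl/rpred1.
by rewrite !exprS; apply: ratcongpM.
Qed.

Lemma ratcongp_sum I (r : seq I) (P : pred I) (F G : I -> rat) :
  (forall i, P i -> ratcongp p (F i) (G i)) ->
  ratcongp p (\sum_(i <- r | P i) F i) (\sum_(i <- r | P i) G i).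
Proof.
move=> FG; elim/big_rec2: _ => [|i x y Pi]; first exact/ratcongp_refl/rpred0.
exact: ratcongpD (FG i Pi).
Qed.

Lemma ratcongp_nat a b : a = b %[mod p] -> ratcongp p a%:R b%:R.
Proof.
move=> ab; apply: (ratcongp_diff (y := (a %/ p)%:R - (b %/ p)%:R)); rewrite ?rpredB ?rpred_nat //.
by rewrite [in LHS](divn_eq a p) [in LHS](divn_eq b p) ab !natrD !natrM; ring.
Qed.

Lemma pint_bernoulli n : (n.+1 < p)%N -> bernoulli n \is a pint.
Proof.
elim/ltn_ind: n => -[_ _ | n IHn lt_np]; first exact: rpred1.
rewrite bernoulliS; apply: rpredM; first by rewrite rpredN pint_invn ?gtnNdvd.
apply: rpred_sum => k _; apply: rpredM; first exact: rpred_nat.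
by apply: IHn => //; have := ltn_ord k; lia.
Qed.

Lemma ratcongp_bernpoly x y : ratcongp p x y ->
  ratcongp p (bernpoly p.-1 x - bernoulli p.-1) (bernpoly p.-1 y - bernoulli p.-1).
Proof.
move=> xy; rewrite !bernpoly_sub_bernoulli big_nat_cond [X in ratcongp _ _ X]big_nat_cond.
apply: ratcongp_sum => j /andP[/andP[_ lt_jp] _].
apply: ratcongpM (ratcongpX _ xy); apply/ratcongp_refl/rpredM; first exact: rpred_nat.
by apply: pint_bernoulli; have := prime_gt0 p_prime; lia.
Qed.

Variable m : nat.
Hypotheses (m_gt0 : (0 < m)%N) (p_ndvd_m : ~~ (p %| m)%N).

Lemma Kp_1B r : Kp p (1 - r) m =
  \sum_(1 <= k < p | (m%:Z %| k%:Z - r * p%:Z)%Z) (p - k)%:R^-1.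
Proof.
rewrite /Kp big_nat_rev; apply: congr_big_nat => // k /andP[k_gt0 lt_kp].
rewrite add1n subSS -subzn ?(ltnW lt_kp) //.
have -> : p%:Z - k%:Z - (1 - r) * p%:Z = - (k%:Z - r * p%:Z) by ring.
by rewrite dvdzE abszN -dvdzE.
Qed.

Lemma ratcongp_Kp_1B r : ratcongp p (Kp p r m) (- Kp p (1 - r) m).
Proof.
rewrite Kp_1B /Kp -sumrN big_nat_cond [X in ratcongp _ _ X]big_nat_cond.
apply: ratcongp_sum => k /andP[/andP[k_gt0 lt_kp] _].
have pk_gt0 : (0 < p - k)%N by rewrite subn_gt0.
have p_ndvd_k : ~~ (p %| k)%N by rewrite gtnNdvd.
have p_ndvd_pk : ~~ (p %| p - k)%N by rewrite gtnNdvd // ltn_subrL k_gt0 prime_gt0.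
apply: (ratcongp_diff (y := (k * (p - k))%:R^-1)).
- by rewrite rpredN pint_invn.
- by rewrite pint_invn // Euclid_dvdM // negb_or p_ndvd_k.
rewrite opprK natrM.
have -> : (p%:R : rat) = k%:R + (p - k)%:R by rewrite -natrD subnKC // ltnW.
by field; rewrite !pnatr_eq0 -!lt0n k_gt0 pk_gt0.
Qed.

(* m/(p - k) + m/(k + sp) = m (s + 1) p / ((p - k)(k + sp)). *)
Lemma ratcongp_mulKpS s : ratcongp p (m%:R * Kp p s.+1%:Z m)
  (- \sum_(1 <= k < p | (m %| k + s * p)%N) m%:R / (k + s * p)%:R).
Proof.
have -> : s.+1%:Z = 1 - (- s%:Z) by rewrite opprK -addn1 PoszD addrC.
rewrite Kp_1B mulr_sumr -sumrN.
have dvd_shift k : (m%:Z %| k%:Z - - s%:Z * p%:Z)%Z = (m %| k + s * p)%N.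
  by rewrite mulNr opprK -PoszM -PoszD.
under eq_bigl => k do rewrite dvd_shift.
rewrite big_nat_cond [X in ratcongp _ _ X]big_nat_cond.
apply: ratcongp_sum => k /andP[/andP[k_gt0 lt_kp] _].
have p_ndvd_ksp : ~~ (p %| k + s * p)%N by rewrite dvdn_addl ?dvdn_mull // gtnNdvd.
have p_ndvd_pk : ~~ (p %| p - k)%N by rewrite gtnNdvd ?subn_gt0 // ltn_subrL k_gt0 prime_gt0.
apply: (ratcongp_diff (y := (m * s.+1)%:R / ((p - k) * (k + s * p))%:R)).
- by rewrite rpredN; apply: rpredM; [exact: rpred_nat | exact: pint_invn].
- apply: rpredM; first exact: rpred_nat.
  by rewrite pint_invn // Euclid_dvdM // negb_or p_ndvd_pk.
have ksp_neq0 : (k + s * p)%:R != 0 :> rat by rewrite pnatr_eq0; apply: contraNneq p_ndvd_ksp => ->.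
have pk_neq0 : (p - k)%:R != 0 :> rat by rewrite pnatr_eq0; apply: contraNneq p_ndvd_pk => ->.
move: ksp_neq0 pk_neq0; rewrite -addn1 !(natrM, natrD) natrB ?(ltnW lt_kp) //.
by move=> ? ?; field; apply/andP.
Qed.

Lemma sum_multiples_inv n :
  \sum_(0 <= t < n * p | (m %| t)%N && ~~ (p %| t)%N) m%:R / t%:R =
  \sum_(1 <= k < (p * n %/ m).+1 | ~~ (p %| k)%N) k%:R^-1 :> rat.
Proof.
rewrite big_mkcondr /=.
have -> : \sum_(0 <= t < n * p | (m %| t)%N) (if ~~ (p %| t)%N then m%:R / t%:R else 0) =
    \sum_(0 <= t < (n * p).+1 | (m %| t)%N) (if ~~ (p %| t)%N then m%:R / t%:R else 0 : rat).
  by rewrite [RHS]big_mkcond big_nat_recr //= (dvdn_mull n (dvdnn p)) if_same addr0 -big_mkcond.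
rewrite big_nat_dvd // (mulnC n p) big_ltn //= muln0 dvdn0 add0r [RHS]big_mkcond.
apply: eq_big_nat => j /andP[j_gt0 _]; rewrite Euclid_dvdM // (negbTE p_ndvd_m) /=.
by case: ifP => // _; rewrite natrM invfM mulVKf // pnatr_eq0 -lt0n.
Qed.

Lemma ratcongp_mul_sum_Kp n :
  ratcongp p (m%:R * \sum_(1 <= r < n.+1) Kp p r%:Z m)
    (- \sum_(1 <= k < (p * n %/ m).+1 | ~~ (p %| k)%N) k%:R^-1).
Proof.
rewrite -sum_multiples_inv // -big_nat_blocks ?prime_gt0 //.
rewrite big_add1 /= mulr_sumr -sumrN.
by apply: ratcongp_sum => s _; apply: ratcongp_mulKpS.
Qed.

Hypothesis p_odd : odd p.

Lemma ratcongp_fermat_inv k : (0 < k)%N ->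
  ratcongp p (p.-1%:R * k%:R ^+ p.-2) (- (if ~~ (p %| k)%N then k%:R^-1 else 0)).
Proof.
move=> k_gt0; have p_gt2 := odd_prime_gt2 p_odd p_prime.
have predp : ratcongp p p.-1%:R (-1).
  apply: (ratcongp_diff (y := 1)); rewrite ?rpredN ?rpred1 //.
  by rewrite opprK mulr1 natr1 prednK // prime_gt0.
case: ifP => [p_ndvd_k | /negbFE/dvdnP[q ->]].
  have fermat : ratcongp p (k%:R ^+ p.-1) 1.
    rewrite -natrX; apply: (@ratcongp_nat _ 1).
    by rewrite -(totient_prime p_prime) Euler_exp_totient // coprime_sym prime_coprime.
  have k_neq0 : (k%:R : rat) != 0 by rewrite pnatr_eq0 -lt0n.
  have -> : p.-1%:R * k%:R ^+ p.-2 = p.-1%:R * k%:R ^+ p.-1 * k%:R^-1 :> rat.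
    by rewrite -mulrA (_ : p.-1 = p.-2.+1) ?exprSr ?mulfK //; lia.
  rewrite -mulN1r -[-1](mulr1 (-1)).
  by apply: ratcongpM (ratcongpM predp fermat) _; apply/ratcongp_refl/pint_invn.
have p2_neq0 : (p.-2 == 0)%N = false by lia.
have := ratcongpM predp (ratcongpX p.-2 (ratcongp_nat (_ : q * p = 0 %[mod p])%N)).
by rewrite modnMl mod0n expr0n p2_neq0 mulr0 oppr0; apply.
Qed.

Lemma ratcongp_bernpoly_fracpart n :
  ratcongp p (bernpoly p.-1 (fracpart ((p * n)%:R / m%:R)) - bernoulli p.-1)
    (- \sum_(1 <= k < (p * n %/ m).+1 | ~~ (p %| k)%N) k%:R^-1).
Proof.
have p_gt2 := odd_prime_gt2 p_odd p_prime.
set N := (p * n %/ m)%N.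
apply: (@ratcongp_trans (bernpoly p.-1 (- N%:R) - bernoulli p.-1)).
  apply: ratcongp_bernpoly; rewrite fracpart_divn //.
  apply: (ratcongp_diff (y := n%:R / m%:R)).
  - by rewrite rpredN rpred_nat.
  - by apply: rpredM; [exact: rpred_nat | exact: pint_invn].
  - by rewrite opprK subrK natrM mulrA.
rewrite bernpoly_oppn; last 2 first.
- by rewrite -subn1; lia.
- by move: p_odd; rewrite -(subnK (ltnW p_gt2)) addn2 /= negbK.
rewrite [X in ratcongp _ _ (- X)]big_mkcond -sumrN big_nat_cond [X in ratcongp _ _ X]big_nat_cond.
by apply: ratcongp_sum => k /andP[/andP[k_gt0 _] _]; apply: ratcongp_fermat_inv.
Qed.

End PAdicCongruence.

Theorem corollary2p1 (m n p : nat) (hm : (0 < m)%N) (hn : (0 < n)%N)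
    (hp : prime p) (hodd : odd p) (hpm : ~~ (p %| m)%N) :
  [/\ ratcongp p
        (bernpoly p.-1 (fracpart ((p * n)%:R / m%:R)) - bernoulli p.-1)
        (m%:R * \sum_(1 <= r < n.+1) Kp p r%:Z m),
      ratcongp p
        (m%:R * \sum_(1 <= r < n.+1) Kp p r%:Z m)
        (- \sum_(1 <= k < (p * n %/ m).+1 | ~~ (p %| k)%N) (k%:R : rat)^-1)
    & forall r : int, ratcongp p (Kp p r m) (- Kp p (1 - r) m)].
Proof.
have harmonic := ratcongp_mul_sum_Kp hp hm hpm n.
split=> //; last exact: ratcongp_Kp_1B.
exact: ratcongp_trans (ratcongp_bernpoly_fracpart hp hm hpm hodd n) (ratcongp_sym hp harmonic).
Qed.
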